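(* Let $s\ge r\ge2$, let $Q$ be an $s$-vertex $r$-graph and let $\mathcal P$ be a hereditary and multiplicative property of $r$-graphs. Then $\lambda^{(p)}(Q,\mathcal P)=\pi(Q,\mathcal P)$ for every $p\ge1$; in particular $\mathcal P$ is $Q$-flat.
   Context: An $r$-graph ($r\ge 2$) is a finite hypergraph all of whose edges have exactly $r$ vertices. For $I\subseteq V(H)$, $H[I]$ denotes the induced subhypergraph on $I$. For an $s$-vertex $r$-graph $Q$ and an $r$-graph $H$, $\mathcal N(Q,H)$ is the number of (not necessarily induced) subgraphs of $H$ isomorphic to $Q$. For an $n$-vertex $r$-graph $H$ with vertex set $[n]$ and $\mathbf x\in\mathbb R^n$, $P_{Q,H}(\mathbf x)=s!\sum_{\{i_1,\dots,i_s\}\in\binom{[n]}{s}}\mathcal N(Q,H[\{i_1,\dots,i_s\}])\,x_{i_1}\cdots x_{i_s}$, and for $p\ge1$, $\lambda^{(p)}(Q,H)=\max_{\|\mathbf x\|_p=1}P_{Q,H}(\mathbf x)$. A hereditary property $\mathcal P$ of $r$-graphs is a family of $r$-graphs closed under isomorphism and under taking induced subgraphs; as a standing assumption, whenever $H\in\mathcal P$, the disjoint union of $H$ with an isolated vertex is also in $\mathcal P$. $\mathcal P_n$ is the set of members of $\mathcal P$ with $n$ vertices. $ex(Q,\mathcal P_n)=\max\{\mathcal N(Q,H):H\in\mathcal P_n\}$ and $\pi(Q,\mathcal P)=\lim_{n\to\infty}ex(Q,\mathcal P_n)/\binom ns$ (this limit exists). $\lambda^{(p)}(Q,\mathcal P_n)=\max\{\lambda^{(p)}(Q,H):H\in\mathcal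 P_n\}$ and $\lambda^{(p)}(Q,\mathcal P)=\lim_{n\to\infty}\lambda^{(p)}(Q,\mathcal P_n)n^{s/p-s}$ (this limit exists). For an $r$-graph $H$ on vertex set $[n]$ and positive integers $k_1,\dots,k_n$, the blow-up $H(k_1,\dots,k_n)$ is obtained by replacing each vertex $i$ by a class $V_i$ of $k_i$ vertices (classes pairwise disjoint), whose edges are all $r$-sets $\{u_1,\dots,u_r\}$ with $u_j\in V_{i_j}$ for some edge $\{i_1,\dots,i_r\}\in E(H)$. $\mathcal P$ is multiplicative if every blow-up of every member of $\mathcal P$ is in $\mathcal P$. $\mathcal P$ is $Q$-flat if $\lambda^{(1)}(Q,\mathcal P)=\pi(Q,\mathcal P)$. *)

From HB Require Import structures.
From mathcomp Require Import all_boot all_order all_algebra.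
From mathcomp Require Import all_classical all_reals all_analysis.
Set Implicit Arguments. Unset Strict Implicit. Unset Printing Implicit Defensive.
Import Order.TTheory GRing.Theory Num.Theory numFieldNormedType.Exports.
Local Open Scope ring_scope.

Notation hgraph n := {set {set 'I_n}}.

Definition uniform (r : nat) {T : finType} (E : {set {set T}}) : bool :=
  [forall e in E, #|e| == r].

Definition pullback {T U : finType} (f : T -> U) (E : {set {set U}})
  : {set {set T}} := [set e : {set T} | f @: e \in E].

Definition hprop := forall n : nat, pred (hgraph n).

Definition prop_of_rgraphs (r : nat) (P : hprop) : Prop :=
  forall n (E : hgraph n), P n E -> uniform r E.

Definition iso_closed (P : hprop) : Prop :=
  forall n m (f : 'I_m -> 'I_n) (E : hgraph n),
    bijective f -> P n E -> P m (pullback f E).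

(* closed under induced subgraphs: H[I] with I the image of the injective f
   (relabelled along f) *)
Definition induced_closed (P : hprop) : Prop :=
  forall n m (f : 'I_m -> 'I_n) (E : hgraph n),
    injective f -> P n E -> P m (pullback f E).

Definition isolated_closed (P : hprop) : Prop :=
  forall n (E : hgraph n),
    P n E -> P n.+1 ((fun e : {set 'I_n} => widen_ord (leqnSn n) @: e) @: E).

Definition hereditary (P : hprop) : Prop := iso_closed P /\ induced_closed P.

Definition blowup_vert {n : nat} (k : 'I_n -> nat) := {i : 'I_n & 'I_(k i)}.

Definition blowup (r : nat) {n : nat} (k : 'I_n -> nat) (E : hgraph n)
  : {set {set blowup_vert k}} :=
  [set e : {set blowup_vert k} | (#|e| == r) && ((tag @: e) \in E)].

Definition multiplicative (r : nat) (P : hprop) : Prop :=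
  forall n (E : hgraph n) (k : 'I_n -> nat),
    (forall i, (0 < k i)%N) -> P n E ->
    forall N (phi : 'I_N -> blowup_vert k), bijective phi ->
      P N (pullback phi (blowup r k E)).

Definition copies_in {s n : nat} (Q : hgraph s) (E : hgraph n) (I : {set 'I_n})
  : nat :=
  #|[set VE : {set 'I_n} * hgraph n |
      [&& VE.1 \subset I, VE.2 \subset E &
         [exists f : {ffun 'I_s -> 'I_n},
            [&& injectiveb f, f @: [set: 'I_s]%SET == VE.1 &
                VE.2 == ((fun e : {set 'I_s} => f @: e) @: Q)]]]]|.

Definition copies {s n : nat} (Q : hgraph s) (E : hgraph n) : nat :=
  copies_in Q E [set: 'I_n]%SET.

Section Analytic.
Variable R : realType.

Definition PQH {s n : nat} (Q : hgraph s) (E : hgraph n) (x : 'I_n -> R) : R :=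
  (s`!)%:R * \sum_(I : {set 'I_n} | #|I| == s)
                (copies_in Q E I)%:R * \prod_(i in I) x i.

Definition pnorm {n : nat} (p : R) (x : 'I_n -> R) : R :=
  powR (\sum_(i < n) powR `|x i| p) (p^-1).

Definition lambdaH {s n : nat} (p : R) (Q : hgraph s) (E : hgraph n) : R :=
  sup [set PQH Q E x | x in [set x : 'I_n -> R | pnorm p x = 1]]%classic.

Definition lambdaPn {s : nat} (p : R) (Q : hgraph s) (P : hprop) (n : nat) : R :=
  sup [set lambdaH p Q E | E in [set E : hgraph n | P n E]]%classic.

Definition exQ {s : nat} (Q : hgraph s) (P : hprop) (n : nat) : nat :=
  \max_(E : hgraph n | P n E) copies Q E.

Definition piQ {s : nat} (Q : hgraph s) (P : hprop) : R :=
  limn (fun n : nat => (exQ Q P n)%:R / ('C(n, s))%:R : R).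

Definition lambdaP {s : nat} (p : R) (Q : hgraph s) (P : hprop) : R :=
  limn (fun n : nat => lambdaPn p Q P n * powR (n%:R) (s%:R / p - s%:R)).

Definition Qflat {s : nat} (Q : hgraph s) (P : hprop) : Prop :=
  lambdaP 1 Q P = piQ Q P.

End Analytic.

From mathcomp Require Import all_boot all_order all_algebra.
From mathcomp Require Import all_classical all_reals all_analysis.
From mathcomp Require Import ring lra.
Import Order.TTheory GRing.Theory Num.Theory numFieldNormedType.Exports.
(* Imported after GRing.Theory so that [multiplicative] is the hypergraph property. *)

(* Let d(m) = s! ex(Q, P_m) / m^s and d* = sup_m d(m).  Every copy of Q in H
   together with a choice of one vertex in each class over its vertices gives a
   copy of Q in the blow-up H(k_1, ..., k_n), so that blow-up has at least
   sum_{copies} prod k_i copies of Q.  Blowing up by the integers ceil(m x_i)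
   and letting m grow gives P_{Q,H}(x) <= d* on the simplex for every H in P;
   balanced blow-ups give d(N) >= (1 - n/N)^s d(n), whence d(N) -> d*.
   By homogeneity and Hoelder, lambda^(p)(Q, P_n) n^(s/p - s) lies between d(n)
   (test the constant vector on an extremal H) and d*, so it tends to d*; and
   ex(Q, P_n) / C(n, s) -> d* because s! C(n, s) / n^s -> 1. *)

Set Implicit Arguments. Unset Strict Implicit. Unset Printing Implicit Defensive.
Local Open Scope ring_scope.

Section Copies.
Variables (s n : nat) (Q : hgraph s) (E : hgraph n).

Definition copy_set (I : {set 'I_n}) : {set {set 'I_n} * hgraph n} :=
  [set VE : {set 'I_n} * hgraph n |
      [&& VE.1 \subset I, VE.2 \subset E &
         [exists f : {ffun 'I_s -> 'I_n},
            [&& injectiveb f, f @: [set: 'I_s] == VE.1 &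
                VE.2 == ((fun e : {set 'I_s} => f @: e) @: Q)]]]].

Lemma copies_inE (I : {set 'I_n}) : copies_in Q E I = #|copy_set I|.
Proof. by []. Qed.

Lemma card_copy_vertices (I : {set 'I_n}) VE : VE \in copy_set I -> #|VE.1| = s.
Proof.
case: VE => V E'; rewrite inE => /and3P[_ _ /existsP[f /and3P[/injectiveP fi /eqP <- _]]].
by rewrite card_imset // cardsT card_ord.
Qed.

Lemma copy_edge_sub V E' e :
  (V, E') \in copy_set [set: 'I_n] -> e \in E' -> e \subset V.
Proof.
rewrite inE => /and3P[_ _ /existsP[f /and3P[_ /eqP /= fV /eqP /= fE']]].
by rewrite fE' -fV => /imsetP[q _ ->]; apply/imsetS/fintype.subsetP.
Qed.

Lemma copies_in_spanning (I : {set 'I_n}) : #|I| = s ->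
  copies_in Q E I = #|[set c in copy_set [set: 'I_n] | c.1 == I]|.
Proof.
move=> hI; apply: eq_card => -[V E']; rewrite !inE /=.
case: existsP => [[f /and3P[/injectiveP fi /eqP fV _]]|_]; last by rewrite !andbF.
have cV : #|V| = s by rewrite -fV card_imset // cardsT card_ord.
rewrite finset.subsetT !andbT andbC; congr (_ && _).
by rewrite eqEcard cV hI leqnn andbT.
Qed.

Lemma copies_leq_expn : (copies Q E <= n ^ s)%N.
Proof.
rewrite /copies copies_inE.
pose g (f : {ffun 'I_s -> 'I_n}) :=
  (f @: [set: 'I_s], (fun e : {set 'I_s} => f @: e) @: Q).
apply: (@leq_trans #|[set g f | f in [set: {ffun 'I_s -> 'I_n}]]|).
  apply: subset_leq_card; apply/fintype.subsetP => -[V E']; rewrite inE.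
  case/and3P => _ _ /existsP[f /and3P[_ /eqP /= fV /eqP /= fE']].
  by apply/imsetP; exists f; rewrite ?inE // /g fV fE'.
by apply: leq_trans (leq_imset_card _ _) _; rewrite cardsT card_ffun !card_ord.
Qed.

Variable R : realType.

Lemma PQH_copy_sum (x : 'I_n -> R) : PQH Q E x =
  s`!%:R * \sum_(c in copy_set [set: 'I_n]) \prod_(i in c.1) x i.
Proof.
rewrite /PQH; congr (_ * _).
rewrite (partition_big (fun c => c.1) (fun I : {set 'I_n} => #|I| == s)) /=;
  last by move=> c /card_copy_vertices ->.
apply: eq_bigr => I /eqP hI; rewrite copies_in_spanning //.
rewrite [RHS](eq_bigr (fun=> \prod_(i in I) x i)); last by move=> c /andP[_ /eqP ->].
rewrite sumr_const mulr_natl; congr (_ *+ _); apply: eq_card => c.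
by rewrite !inE [in RHS]unfold_in /= !inE.
Qed.

Lemma PQH_scale (a : R) (x : 'I_n -> R) :
  PQH Q E (fun i => a * x i) = a ^+ s * PQH Q E x.
Proof.
rewrite !PQH_copy_sum mulrCA; congr (_ * _); rewrite mulr_sumr.
apply: eq_bigr => c hc.
by rewrite big_split /= prodr_const (card_copy_vertices hc).
Qed.

Lemma PQH_const1 : PQH Q E (fun=> 1 : R) = s`!%:R * (copies Q E)%:R.
Proof.
rewrite PQH_copy_sum; under eq_bigr do rewrite prodr_const expr1n.
by rewrite sumr_const.
Qed.

Lemma ler_PQH (x y : 'I_n -> R) : (forall i, 0 <= x i <= y i) ->
  PQH Q E x <= PQH Q E y.
Proof.
move=> h; rewrite !PQH_copy_sum ler_wpM2l //.
by apply: ler_sum => c _; apply: ler_prod => i _.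
Qed.

Lemma PQH_le_norm (x : 'I_n -> R) : PQH Q E x <= PQH Q E (fun i => `|x i|).
Proof.
rewrite !PQH_copy_sum ler_wpM2l //; apply: le_trans (ler_norm _) _.
apply: le_trans (ler_norm_sum _ _ _) _.
by apply: ler_sum => c _; rewrite normr_prod.
Qed.

End Copies.

Lemma card_blowup_vert n (k : 'I_n -> nat) : #|{: blowup_vert k}| = (\sum_i k i)%N.
Proof.
rewrite card_tagged sumnE big_map big_enum /=.
by apply: eq_bigr => i _; rewrite card_ord.
Qed.

(* A choice of one vertex in the class of each i in V is a partial function
   w : 'I_n -> option (blowup_vert k) with support V, i.e. an element of
   [pfamily None V in_class]; off V, [chosen_vertex w] is an arbitrary default. *)
Section BlowupCopies.
Variables (r s n : nat) (Q : hgraph s) (E : hgraph n).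
Hypothesis Eu : uniform r E.
Variables (k : 'I_n -> nat) (N : nat).
Variables (phi : 'I_N -> blowup_vert k) (psi : blowup_vert k -> 'I_N).
Hypothesis psiK : cancel psi phi.
Hypothesis k_gt0 : forall i, (0 < k i)%N.

Definition in_class (i : 'I_n) : pred (option (blowup_vert k)) :=
  [pred o | if o is Some z then tag z == i else false].

Definition chosen_vertex (w : {ffun 'I_n -> option (blowup_vert k)}) i :=
  psi (odflt (Tagged (fun j => 'I_(k j)) (Ordinal (k_gt0 i))) (w i)).

Lemma card_in_class i : #|in_class i| = k i.
Proof.
rewrite -[RHS]card_ord -cardsT.
rewrite -(@card_imset _ _ (fun j : 'I_(k i) => Some (Tagged (fun j => 'I_(k j)) j)));
  last first.
  by move=> a b [] ab; apply: eq_from_Tagged ab.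
apply: eq_card => o; rewrite inE; apply/idP/imsetP => [|[j _ ->]] //=.
case: o => [z|] //= /eqP zi; exists (etagged zi); first by rewrite inE.
by rewrite etaggedK.
Qed.

Section Choice.
Variables (V : {set 'I_n}) (w : {ffun 'I_n -> option (blowup_vert k)}).
Hypothesis wV : w \in pfamily None V in_class.

Lemma chosen_vertexE i : i \in V -> w i = Some (phi (chosen_vertex w i)).
Proof.
move: wV => /pfamilyP[_ H] iV; have := H i iV; rewrite /chosen_vertex psiK inE.
by case: (w i).
Qed.

Lemma tag_chosen_vertex i : i \in V -> tag (phi (chosen_vertex w i)) = i.
Proof.
move: wV => /pfamilyP[_ H] iV; have := H i iV; rewrite /chosen_vertex psiK inE.
by case: (w i) => //= z /eqP.
Qed.

Lemma choice_notin i : i \notin V -> w i = None.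
Proof.
move: wV => /pfamilyP[/fintype.subsetP S _] iV; apply/eqP; apply: contraNT iV => h.
by apply: S; rewrite inE.
Qed.

Lemma chosen_vertex_inj : {in V &, injective (chosen_vertex w)}.
Proof.
by move=> i j iV jV hij; rewrite -(tag_chosen_vertex iV) hij tag_chosen_vertex.
Qed.

Lemma tag_chosen_set (A : {set 'I_n}) : A \subset V ->
  [set tag (phi (chosen_vertex w i)) | i in A] = A.
Proof.
move=> AV; rewrite (eq_in_imset (g := id)) ?imset_id //.
by move=> i iA /=; rewrite tag_chosen_vertex // (fintype.subsetP AV).
Qed.

End Choice.

Definition lift_copy (cw : ({set 'I_n} * hgraph n) * {ffun 'I_n -> option (blowup_vert k)})
  : {set 'I_N} * hgraph N :=
  (chosen_vertex cw.2 @: cw.1.1,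
   (fun e : {set 'I_n} => chosen_vertex cw.2 @: e) @: cw.1.2).

Definition copy_choices :=
  [set cw : ({set 'I_n} * hgraph n) * {ffun 'I_n -> option (blowup_vert k)} |
    (cw.1 \in copy_set Q E [set: 'I_n]) && (cw.2 \in pfamily None cw.1.1 in_class)].

Lemma copy_choicesE cw : (cw \in copy_choices) =
  (cw.1 \in copy_set Q E [set: 'I_n]) && (cw.2 \in pfamily None cw.1.1 in_class).
Proof. by rewrite finset.in_set. Qed.

Section LiftCopy.
Variables (V : {set 'I_n}) (E' : hgraph n) (w : {ffun 'I_n -> option (blowup_vert k)}).
Hypothesis VE' : (V, E') \in copy_set Q E [set: 'I_n].
Hypothesis wV : w \in pfamily None V in_class.

Lemma lift_copy_edge e : e \in E' ->
  chosen_vertex w @: e \in pullback phi (blowup r k E).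
Proof.
move=> eE'; have eV := copy_edge_sub VE' eE'.
have eE : e \in E.
  by move: VE'; rewrite inE => /and3P[_ /fintype.subsetP sE' _]; apply: sE'.
rewrite !inE -!imset_comp; apply/andP; split.
  rewrite card_in_imset; first by move/forallP/(_ e)/implyP: Eu; apply.
  move=> i j ie je /(congr1 tag) /=.
  by rewrite !(tag_chosen_vertex wV) // (fintype.subsetP eV).
by rewrite (tag_chosen_set wV eV).
Qed.

Lemma lift_copy_mem :
  lift_copy ((V, E'), w) \in copy_set Q (pullback phi (blowup r k E)) [set: 'I_N].
Proof.
move: (VE'); rewrite inE => /and3P[_ _ /existsP[f]].
move=> /and3P[/injectiveP fi /eqP /= fV /eqP /= fE'].
have fV_mem j : f j \in V by rewrite -fV imset_f.
rewrite inE /=; apply/and3P; split.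
- exact: finset.subsetT.
- by apply/fintype.subsetP => _ /imsetP[e eE' ->]; apply: lift_copy_edge.
- apply/existsP; exists [ffun j => chosen_vertex w (f j)]; apply/and3P; split.
  + apply/injectiveP => j1 j2; rewrite !ffunE => /(chosen_vertex_inj wV) fj.
    by apply: fi; apply: fj; apply: fV_mem.
  + by rewrite -fV -imset_comp; apply/eqP/eq_imset => j; rewrite ffunE.
  + rewrite fE' -imset_comp; apply/eqP/eq_imset => q /=; rewrite -imset_comp.
    by apply: eq_imset => j; rewrite ffunE.
Qed.

Lemma project_lift_copy :
  [set tag (phi v) | v in (lift_copy ((V, E'), w)).1] = V /\
  [set [set tag (phi v) | v in e'] | e' : {set 'I_N} in (lift_copy ((V, E'), w)).2] = E'.
Proof.
split; first by rewrite /= -imset_comp (tag_chosen_set wV).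
rewrite /= -imset_comp (eq_in_imset (g := id)) ?imset_id //.
by move=> e eE' /=; rewrite -imset_comp (tag_chosen_set wV) // (copy_edge_sub VE').
Qed.

End LiftCopy.

Lemma lift_copy_inj : {in copy_choices &, injective lift_copy}.
Proof.
move=> [[V1 E1] w1] [[V2 E2] w2]; rewrite !copy_choicesE /=.
move=> /andP[c1 w1V] /andP[c2 w2V] hL.
have [pV1 pE1] := project_lift_copy c1 w1V; have [pV2 pE2] := project_lift_copy c2 w2V.
have eV : V1 = V2 by rewrite -pV1 hL pV2.
have eE : E1 = E2 by rewrite -pE1 hL pE2.
subst V2 E2; congr (_, _); apply/ffunP => i.
have [iV|iV] := boolP (i \in V1); last by rewrite !(choice_notin w1V, choice_notin w2V).
rewrite (chosen_vertexE w1V iV) (chosen_vertexE w2V iV); congr (Some (phi _)).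
have : chosen_vertex w1 i \in (lift_copy ((V1, E1), w2)).1 by rewrite -hL imset_f.
case/imsetP => j jV hj.
have ij : i = j by rewrite -(tag_chosen_vertex w1V iV) hj (tag_chosen_vertex w2V jV).
by rewrite hj ij.
Qed.

Lemma blowup_copies_ge :
  (\sum_(c in copy_set Q E [set: 'I_n]) \prod_(i in c.1) k i
     <= copies Q (pullback phi (blowup r k E)))%N.
Proof.
have -> : (\sum_(c in copy_set Q E [set: 'I_n]) \prod_(i in c.1) k i = #|copy_choices|)%N.
  transitivity (\sum_(c in copy_set Q E [set: 'I_n])
                   \sum_(w in pfamily None c.1 in_class) 1)%N.
    apply: eq_bigr => c _; rewrite sum1_card card_pfamily foldrE big_map big_enum.
    by apply: eq_bigr => i _; rewrite card_in_class.
  by rewrite pair_big_dep sum1_card; apply: eq_card => cw; rewrite copy_choicesE.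
rewrite -(card_in_imset lift_copy_inj) /copies copies_inE; apply: subset_leq_card.
apply/fintype.subsetP => _ /imsetP[[[V E'] w] + ->].
by rewrite copy_choicesE /= => /andP[]; exact: lift_copy_mem.
Qed.

End BlowupCopies.

Local Open Scope classical_set_scope.

Section RealFacts.
Variable R : realType.

Lemma cvg_one_add_divn_pow (a : R) m :
  (fun N : nat => (1 + a / N%:R) ^+ m) @ \oo --> (1 : R).
Proof.
have base : (fun N : nat => 1 + a / N%:R) @ \oo --> (1 : R).
  have := cvgD (cvg_cst (1 : R)) (cvgM (cvg_cst a) (@cvg_harmonic R)).
  rewrite mulr0 addr0 => h; rewrite -cvg_shiftS; exact: h.
rewrite -[X in _ --> X](expr1n _ m).
exact: (continuous_cvg _ (@exprn_continuous R m 1) base).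
Qed.

Lemma powR_pnorm_eq1 (p : R) n (x : 'I_n -> R) : 0 < p -> pnorm p x = 1 ->
  \sum_i `|x i| `^ p = 1.
Proof.
move=> p0; rewrite /pnorm => /eqP; rewrite powR_eq1 => /or3P[/eqP -> //| |].
  by rewrite ltNge sumr_ge0 // => i _; rewrite powR_ge0.
by rewrite invr_eq0 gt_eqF.
Qed.

(* Hölder's inequality against the constant vector, via Young's inequality *)
Lemma sum_le_card_powR (p : R) n (a : 'I_n -> R) : 1 <= p ->
  (forall i, 0 <= a i) -> \sum_i a i `^ p = 1 -> \sum_i a i <= n%:R `^ (1 - p^-1).
Proof.
move=> hp a0 h.
have nR : 0 < n%:R :> R.
  case: n a a0 h => [|n] a _; rewrite ?ltr0n // big_ord0 => /eqP.
  by rewrite eq_sym oner_eq0.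
have [p1 | p1] := eqVneq p 1.
  by subst p; rewrite invr1 subrr powRr0 -h; apply: ler_sum => i _; rewrite powRr1.
have hp1 : 1 < p by rewrite lt_neqAle eq_sym p1 hp.
have p0 : 0 < p by apply: lt_trans hp1.
have pm1 : 0 < p - 1 by rewrite subr_gt0.
pose q := p / (p - 1).
have q0 : 0 < q by rewrite divr_gt0.
have qinv : q^-1 = 1 - p^-1 by rewrite invf_div; field; rewrite gt_eqF.
pose t := n%:R `^ (- q^-1).
have tq : t `^ q = n%:R^-1.
  by rewrite -powRrM mulNr mulVf ?gt_eqF // powR_inv1 // ltW.
have sum_t_le1 : (\sum_i a i) * t <= 1.
  rewrite mulr_suml; apply: (@le_trans _ _ (\sum_i (a i `^ p / p + t `^ q / q))).
    apply: ler_sum => i _; apply: conjugate_powR; rewrite ?powR_ge0 //.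
    by rewrite qinv addrC subrK.
  rewrite big_split /= -mulr_suml h sumr_const card_ord tq -mulrnAl -mulr_natr.
  by rewrite mulVf ?gt_eqF // mul1r div1r qinv addrC subrK.
have -> : n%:R `^ (1 - p^-1) = t^-1 by rewrite /t powRN invrK qinv.
by rewrite -[X in _ <= X]mul1r ler_pdivlMr ?powR_gt0.
Qed.

End RealFacts.

Unset Implicit Arguments.

Lemma exists_parts_ge_divn n N : (0 < n)%N ->
  exists k : 'I_n -> nat, (forall i, N %/ n <= k i)%N /\ (\sum_i k i)%N = N.
Proof.
move=> n0; pose i0 : 'I_n := Ordinal n0.
exists (fun i => if i == i0 then N %/ n + N %% n else N %/ n)%N; split.
  by move=> i; case: (i == i0); rewrite ?leq_addr.
rewrite (bigD1 i0) //= (eq_bigr (fun=> N %/ n)%N); last by move=> i /negbTE ->.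
rewrite sum_nat_const cardC1 card_ord [RHS](divn_eq N n).
set q := (N %/ n)%N; set t := (N %% n)%N; rewrite -[in RHS](prednK n0).
by rewrite mulnS addnAC mulnC.
Qed.

Section ExtremalNumbers.
Context {r s : nat} (Q : hgraph s) (P : hprop).

Lemma exQ_attained n : (exists E, P n E) ->
  exists2 E : hgraph n, P n E & exQ Q P n = copies Q E.
Proof.
move=> [E0 PE0].
have : (0 < #|[pred E : hgraph n | P n E]|)%N by apply/card_gt0P; exists E0.
move/(eq_bigmax_cond (fun E => copies Q E)) => [E1 PE1 hE1].
by exists E1; rewrite // /exQ -hE1; apply: eq_bigl => E; rewrite inE.
Qed.

Lemma exQ_empty n : ~ (exists E, P n E) -> exQ Q P n = 0%N.
Proof.
by move=> nE; rewrite /exQ big_pred0 // => E; apply/negP => PE; apply: nE; exists E.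
Qed.

Lemma exQ_leq_expn n : (exQ Q P n <= n ^ s)%N.
Proof. by apply/bigmax_leqP => E _; apply: copies_leq_expn. Qed.

Hypotheses (Pu : prop_of_rgraphs r P) (Pm : multiplicative r P).

Lemma exQ_blowup_ge n (E : hgraph n) (k : 'I_n -> nat) :
  P n E -> (forall i, (0 < k i)%N) ->
  (\sum_(c in copy_set Q E [set: 'I_n]%SET) \prod_(i in c.1) k i
     <= exQ Q P (\sum_i k i))%N.
Proof.
move=> PE k_gt0; set N := (\sum_i k i)%N.
have cardN : #|{: blowup_vert k}| = N by rewrite card_blowup_vert.
pose phi (i : 'I_N) : blowup_vert k := enum_val (cast_ord (esym cardN) i).
pose psi (z : blowup_vert k) : 'I_N := cast_ord cardN (enum_rank z).
have phiK : cancel phi psi by move=> i; rewrite /phi /psi enum_valK cast_ordKV.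
have psiK : cancel psi phi by move=> z; rewrite /phi /psi cast_ordK enum_rankK.
apply: leq_trans (blowup_copies_ge Q (Pu n E PE) psiK k_gt0) _.
apply: (@leq_bigmax_cond _ (P N) (copies Q)).
exact: Pm n E k k_gt0 PE N phi (Bijective phiK psiK).
Qed.

Lemma exQ_blowup_floor n N : (0 < n)%N -> (n <= N)%N ->
  ((N %/ n) ^ s * exQ Q P n <= exQ Q P N)%N.
Proof.
move=> n0 nN; have [[E PE]|nE] := pselect (exists E, P n E); last first.
  by rewrite exQ_empty // muln0.
have [k [k_ge sumk]] := exists_parts_ge_divn n N n0.
have k_gt0 i : (0 < k i)%N by apply: leq_trans (k_ge i); rewrite divn_gt0.
have [E1 PE1 ->] := exQ_attained n (ex_intro _ E PE).
have := exQ_blowup_ge _ _ _ PE1 k_gt0; rewrite sumk; apply: leq_trans.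
rewrite /copies copies_inE -sum1_card big_distrr /=.
apply: leq_sum => c hc; rewrite muln1 -(card_copy_vertices hc) -prod_nat_const.
exact: leq_prod.
Qed.

End ExtremalNumbers.

Section BinomialDensity.
Variable R : realType.

Definition binomial_density (s n : nat) : R := s`!%:R * ('C(n, s))%:R / n%:R ^+ s.

Lemma binomial_density_between s n : (s <= n)%N -> (0 < n)%N ->
  (1 + (- s%:R) / n%:R) ^+ s <= binomial_density s n <= 1.
Proof.
move=> sn n0; have nR : 0 < n%:R :> R by rewrite ltr0n.
rewrite /binomial_density -natrM mulnC bin_ffact ffact_prod natr_prod.
apply/andP; split.
  have -> : 1 + (- s%:R) / n%:R = (n - s)%:R / n%:R :> R.
    by rewrite natrB // mulNr -[X in X - _](divff (negbT (gt_eqF nR))) -mulrBl.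
  rewrite expr_div_n ler_pM2r ?invr_gt0 ?exprn_gt0 //.
  rewrite (_ : _ ^+ s = \prod_(i < s) ((n - s)%:R : R)); last first.
    by rewrite prodr_const card_ord.
  by apply: ler_prod => i _; rewrite ler0n ler_nat leq_sub2l // ltnW.
rewrite ler_pdivrMr ?exprn_gt0 // mul1r.
rewrite (_ : _ ^+ s = \prod_(i < s) (n%:R : R)); last by rewrite prodr_const card_ord.
by apply: ler_prod => i _; rewrite ler0n ler_nat leq_subr.
Qed.

Lemma binomial_density_cvg s : binomial_density s @ \oo --> (1 : R).
Proof.
apply: (@squeeze_cvgr _ _ _ _ (fun n : nat => (1 + (- s%:R) / n%:R) ^+ s) (fun=> 1));
  [|exact: cvg_one_add_divn_pow | exact: cvg_cst].
near=> n; apply: binomial_density_between; near: n;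
  [exact: nbhs_infty_ge | exact: nbhs_infty_gt].
Unshelve. all: end_near.
Qed.

End BinomialDensity.

Section ExtremalDensity.
Variables (R : realType) (r s : nat) (Q : hgraph s) (P : hprop).
Hypotheses (s_gt0 : (0 < s)%N) (Pu : prop_of_rgraphs r P) (Pm : multiplicative r P).

Let fact_s_gt0 : 0 < s`!%:R :> R.
Proof. by rewrite ltr0n fact_gt0. Qed.

(* the value of P_{Q,H} at the uniform vector (1/m, ..., 1/m) for an extremal H *)
Definition ex_density (m : nat) : R := s`!%:R * (exQ Q P m)%:R / m%:R ^+ s.

Lemma ex_density0 : ex_density 0 = 0.
Proof. by rewrite /ex_density expr0n gtn_eqF // invr0 mulr0. Qed.

Lemma ex_density_ge0 m : 0 <= ex_density m.
Proof. by rewrite /ex_density !mulr_ge0 ?invr_ge0 // ltW. Qed.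

Lemma ex_density_le_fact m : ex_density m <= s`!%:R.
Proof.
case: m => [|m]; first by rewrite ex_density0 ltW.
rewrite /ex_density -mulrA ger_pMr // ler_pdivrMr ?mul1r ?exprn_gt0 //.
by rewrite -natrX ler_nat exQ_leq_expn.
Qed.

Definition ex_density_sup : R := sup (range ex_density).

Lemma has_sup_ex_density : has_sup (range ex_density).
Proof.
split; first by exists (ex_density 0); exists 0%N.
by exists s`!%:R => _ [m _ <-]; exact: ex_density_le_fact.
Qed.

Lemma ex_density_le_sup m : ex_density m <= ex_density_sup.
Proof. by apply: ub_le_sup; [case: has_sup_ex_density | exists m]. Qed.

Lemma ex_density_sup_ge0 : 0 <= ex_density_sup.
Proof. exact: le_trans (ex_density_ge0 0) (ex_density_le_sup 0). Qed.

Lemma PQH_blowup_le n (E : hgraph n) (k : 'I_n -> nat) :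
  P n E -> (forall i, (0 < k i)%N) ->
  PQH Q E (fun i => (k i)%:R : R) <= s`!%:R * (exQ Q P (\sum_i k i))%:R.
Proof.
move=> PE k_gt0; rewrite PQH_copy_sum; apply: ler_wpM2l; first exact: ltW.
apply: (@le_trans _ _
  ((\sum_(c in copy_set Q E [set: 'I_n]%SET) \prod_(i in c.1) k i)%N)%:R).
  by rewrite natr_sum; apply: ler_sum => c _; rewrite natr_prod.
by rewrite ler_nat; exact: (exQ_blowup_ge Q P Pu Pm _ _ _ PE k_gt0).
Qed.

(* Round m x up to integer class sizes: the blow-up bound of size <= m + n
   controls P_{Q,H}(m x), up to the factor ((m + n) / m)^s. *)
Lemma PQH_simplex_le_approx n (E : hgraph n) (x : 'I_n -> R) m :
  P n E -> (forall i, 0 <= x i) -> \sum_i x i = 1 -> (0 < m)%N ->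
  PQH Q E x <= ex_density_sup * (1 + n%:R / m%:R) ^+ s.
Proof.
move=> PE x0 x1 m0.
pose k (i : 'I_n) := (Num.trunc (m%:R * x i)).+1.
have k_gt0 i : (0 < k i)%N by [].
have n0 : (0 < n)%N.
  case: n E x k PE x0 x1 {k_gt0} => // E x _ _ _; rewrite big_ord0 => /eqP.
  by rewrite eq_sym oner_eq0.
set N := (\sum_i k i)%N.
have N0 : (0 < N)%N by rewrite /N (bigD1 (Ordinal n0)) //= addn_gt0 k_gt0.
have N_le : N%:R <= m%:R + n%:R :> R.
  have -> : m%:R + n%:R = \sum_(i < n) (m%:R * x i + 1) :> R.
    by rewrite big_split /= -mulr_sumr x1 mulr1 sumr_const card_ord.
  rewrite /N natr_sum; apply: ler_sum => i _; rewrite /k -addn1 natrD lerD2r.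
  by rewrite truncn_le mulr_ge0.
have mx_le : m%:R ^+ s * PQH Q E x <= s`!%:R * (exQ Q P N)%:R.
  rewrite -PQH_scale; apply: le_trans (PQH_blowup_le _ _ _ PE k_gt0).
  by apply: ler_PQH => i; rewrite mulr_ge0 //= ltW // truncnS_gt.
have -> : 1 + n%:R / m%:R = (m%:R + n%:R) / m%:R :> R.
  by rewrite mulrDl divff // pnatr_eq0 -lt0n.
rewrite expr_div_n mulrA ler_pdivlMr ?exprn_gt0 ?ltr0n // mulrC.
apply: le_trans mx_le _.
have -> : s`!%:R * (exQ Q P N)%:R = ex_density N * N%:R ^+ s.
  by rewrite /ex_density divfK // expf_neq0 // pnatr_eq0 -lt0n.
apply: ler_pM => //; [exact: ex_density_ge0 | exact: ex_density_le_sup |].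
by apply: lerXn2r => //; rewrite nnegrE.
Qed.

Lemma PQH_simplex_le_sup n (E : hgraph n) (x : 'I_n -> R) :
  P n E -> (forall i, 0 <= x i) -> \sum_i x i = 1 -> PQH Q E x <= ex_density_sup.
Proof.
move=> PE x0 x1.
have cv : (fun m : nat => ex_density_sup * (1 + n%:R / m%:R) ^+ s) @ \oo
    --> ex_density_sup.
  rewrite -[X in _ --> X]mulr1.
  by apply: cvgM; [exact: cvg_cst | exact: cvg_one_add_divn_pow].
rewrite -(cvg_lim (@Rhausdorff R) cv).
apply: limr_ge; first by apply/cvg_ex; exists ex_density_sup.
near=> m; apply: PQH_simplex_le_approx => //; near: m; exact: nbhs_infty_gt.
Unshelve. all: end_near.
Qed.

Definition lambda_bound (p : R) n := ex_density_sup * (n%:R `^ (1 - p^-1)) ^+ s.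

Lemma lambda_bound_ge0 p n : 0 <= lambda_bound p n.
Proof. by rewrite mulr_ge0 ?ex_density_sup_ge0 // exprn_ge0 // powR_ge0. Qed.

(* Rescale |x| to the simplex: its l^1 norm T is at most n^(1 - 1/p). *)
Lemma PQH_le_lambda_bound (p : R) n (E : hgraph n) (x : 'I_n -> R) :
  1 <= p -> P n E -> pnorm p x = 1 -> PQH Q E x <= lambda_bound p n.
Proof.
move=> hp PE hx; apply: le_trans (PQH_le_norm Q E x) _.
set T := \sum_i `|x i|.
have T_le : T <= n%:R `^ (1 - p^-1).
  by apply: sum_le_card_powR => //; apply: powR_pnorm_eq1 (lt_le_trans ltr01 hp) hx.
have T0 : 0 <= T by rewrite sumr_ge0.
apply: (@le_trans _ _ (ex_density_sup * T ^+ s)); last first.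
  by rewrite ler_wpM2l ?ex_density_sup_ge0 // lerXn2r // nnegrE powR_ge0.
have [Tz|Tnz] := eqVneq T 0.
  have x0 i : `|x i| = 0 by apply: (psumr_eq0P (fun j _ => normr_ge0 (x j)) Tz).
  rewrite (_ : (fun i => `|x i|) = (fun i => 0 * 1)); last first.
    by apply: funext => i; rewrite x0 mul0r.
  by rewrite PQH_scale Tz !expr0n gtn_eqF // mul0r mulr0.
have Tp : 0 < T by rewrite lt_neqAle eq_sym Tnz.
rewrite (_ : (fun i => `|x i|) = (fun i => T * (`|x i| / T))); last first.
  by apply: funext => i; rewrite mulrC divfK.
rewrite PQH_scale mulrC ler_wpM2r ?exprn_ge0 //.
apply: PQH_simplex_le_sup => //; first by move=> i; rewrite divr_ge0.
by rewrite -mulr_suml divff.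
Qed.

Lemma lambdaH_le_bound (p : R) n (E : hgraph n) : 1 <= p -> P n E ->
  lambdaH p Q E <= lambda_bound p n.
Proof.
move=> hp PE; rewrite /lambdaH.
have [->|/set0P ne] :=
  eqVneq [set PQH Q E x | x in [set x : 'I_n -> R | pnorm p x = 1]] set0.
  by rewrite sup0 lambda_bound_ge0.
by apply: ge_sup ne _ => _ [x hx <-]; exact: PQH_le_lambda_bound.
Qed.

Lemma lambdaH_ge_copies (p : R) n (E : hgraph n) : 1 <= p -> (0 < n)%N -> P n E ->
  s`!%:R * (copies Q E)%:R * (n%:R `^ (- p^-1)) ^+ s <= lambdaH p Q E.
Proof.
move=> hp n0 PE.
have nR : 0 < n%:R :> R by rewrite ltr0n.
have p0 : 0 < p by apply: lt_le_trans hp.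
pose u := fun _ : 'I_n => n%:R `^ (- p^-1) * 1.
have pu : pnorm p u = 1.
  rewrite /pnorm /u; under eq_bigr do
    rewrite mulr1 ger0_norm ?powR_ge0 // -powRrM mulNr mulVf ?gt_eqF // powR_inv1 ?ltW //.
  by rewrite sumr_const card_ord -[n%:R^-1 *+ n]mulr_natr mulVf ?gt_eqF // powR1.
rewrite mulrC -PQH_const1 -PQH_scale.
apply: ub_le_sup; last by exists u.
by exists (lambda_bound p n) => _ [x hx <-]; exact: PQH_le_lambda_bound.
Qed.

Lemma lambdaPn_le_bound (p : R) n : 1 <= p -> lambdaPn p Q P n <= lambda_bound p n.
Proof.
move=> hp; rewrite /lambdaPn.
have [->|/set0P ne] := eqVneq [set lambdaH p Q E | E in [set E : hgraph n | P n E]] set0.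
  by rewrite sup0 lambda_bound_ge0.
by apply: ge_sup ne _ => _ [E PE <-]; exact: lambdaH_le_bound.
Qed.

Lemma lambdaPn_ge_exQ (p : R) n : 1 <= p -> (0 < n)%N ->
  s`!%:R * (exQ Q P n)%:R * (n%:R `^ (- p^-1)) ^+ s <= lambdaPn p Q P n.
Proof.
move=> hp n0; rewrite /lambdaPn.
have [hE|nE] := pselect (exists E, P n E); last first.
  rewrite exQ_empty // mulr0 mul0r.
  have -> : [set lambdaH p Q E | E in [set E : hgraph n | P n E]] = set0.
    by apply/seteqP; split => // y [E PE _]; apply: nE; exists E.
  by rewrite sup0.
have [E1 PE1 ->] := exQ_attained Q P n hE.
apply: le_trans (lambdaH_ge_copies _ _ _ hp n0 PE1) _.
apply: ub_le_sup; last by exists E1.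
by exists (lambda_bound p n) => _ [E PE <-]; exact: lambdaH_le_bound.
Qed.

Lemma lambdaPn_scaled_between (p : R) n : 1 <= p -> (0 < n)%N ->
  ex_density n <= lambdaPn p Q P n * n%:R `^ (s%:R / p - s%:R) <= ex_density_sup.
Proof.
move=> hp n0.
have p0 : p != 0 by rewrite gt_eqF // (lt_le_trans _ hp).
have nR : n%:R != 0 :> R by rewrite pnatr_eq0 -lt0n.
have scale0 : 0 <= n%:R `^ (s%:R / p - s%:R) :> R by rewrite powR_ge0.
have powX (a : R) : (n%:R `^ a) ^+ s = n%:R `^ (a * s%:R).
  by rewrite -powR_mulrn ?powR_ge0 // -powRrM.
apply/andP; split.
  apply: le_trans (ler_wpM2r scale0 (lambdaPn_ge_exQ _ _ hp n0)).
  rewrite -!mulrA powX -powRD; last by apply/implyP.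
  have -> : - p^-1 * s%:R + (s%:R / p - s%:R) = - s%:R by field.
  by rewrite powR_invn ?ler0n // /ex_density mulrA.
apply: le_trans (ler_wpM2r scale0 (lambdaPn_le_bound _ n hp)) _.
rewrite /lambda_bound -mulrA powX -powRD; last by apply/implyP.
have -> : (1 - p^-1) * s%:R + (s%:R / p - s%:R) = 0 by field.
by rewrite powRr0 mulr1.
Qed.

Lemma ex_density_ge_scaled n N : (0 < N)%N -> (n <= N)%N ->
  (1 - n%:R / N%:R) ^+ s * ex_density n <= ex_density N.
Proof.
move=> N0 nN; have [->|n0] := posnP n; first by rewrite ex_density0 mulr0 ex_density_ge0.
have NR : 0 < N%:R :> R by rewrite ltr0n.
have nR : n%:R != 0 :> R by rewrite pnatr_eq0 -lt0n.
set q := (N %/ n)%N.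
have q_ge : 1 - n%:R / N%:R <= q%:R * n%:R / N%:R :> R.
  rewrite -[X in X - _](divff (negbT (gt_eqF NR))) -mulrBl ler_pM2r ?invr_gt0 //.
  rewrite lerBlDr -!natrM -natrD ler_nat {1}(divn_eq N n) leq_add2l ltnW //.
  by rewrite ltn_pmod.
apply: (le_trans (ler_wpM2r (ex_density_ge0 _) (lerXn2r s _ _ q_ge))).
- by rewrite nnegrE subr_ge0 ler_pdivrMr // mul1r ler_nat.
- by rewrite nnegrE !mulr_ge0 ?invr_ge0.
have -> : (q%:R * n%:R / N%:R) ^+ s * ex_density n
          = s`!%:R * ((q ^ s * exQ Q P n)%N)%:R / N%:R ^+ s.
  rewrite /ex_density natrM natrX expr_div_n exprMn.
  by field; rewrite !expf_neq0 // gt_eqF.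
rewrite /ex_density ler_pM2r ?invr_gt0 ?exprn_gt0 // ler_pM2l // ler_nat.
exact: (exQ_blowup_floor Q P Pu Pm).
Qed.

Lemma ex_density_cvg : ex_density @ \oo --> ex_density_sup.
Proof.
apply/cvgrPdist_lt => e e0.
have [_ [m _ <-] hm] := sup_adherent e0 has_sup_ex_density.
have cv : (fun N : nat => (1 + (- m%:R) / N%:R) ^+ s * ex_density m) @ \oo
    --> ex_density m.
  rewrite -[X in _ --> X]mul1r.
  by apply: cvgM; [exact: cvg_one_add_divn_pow | exact: cvg_cst].
near=> N.
have h1 : ex_density_sup - e < (1 + (- m%:R) / N%:R) ^+ s * ex_density m.
  by near: N; exact: cvgr_gt cv _ hm.
have h2 : (1 - m%:R / N%:R) ^+ s * ex_density m <= ex_density N.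
  by apply: ex_density_ge_scaled; near: N; [exact: nbhs_infty_gt | exact: nbhs_infty_ge].
have h3 := ex_density_le_sup N.
rewrite mulNr in h1; rewrite ger0_norm ?subr_ge0 //; lra.
Unshelve. all: end_near.
Qed.

Lemma lambdaPn_scaled_cvg (p : R) : 1 <= p ->
  (fun n : nat => lambdaPn p Q P n * n%:R `^ (s%:R / p - s%:R)) @ \oo --> ex_density_sup.
Proof.
move=> hp; apply: (@squeeze_cvgr _ _ _ _ ex_density (fun=> ex_density_sup));
  [|exact: ex_density_cvg | exact: cvg_cst].
near=> n; apply: lambdaPn_scaled_between => //; near: n; exact: nbhs_infty_gt.
Unshelve. all: end_near.
Qed.

Lemma exQ_binomial_cvg :
  (fun n : nat => (exQ Q P n)%:R / ('C(n, s))%:R : R) @ \oo --> ex_density_sup.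
Proof.
have ratio : (fun n => ex_density n / binomial_density R s n) @ \oo --> ex_density_sup.
  rewrite -[X in _ --> X]mulr1 -invr1; apply: cvgM; first exact: ex_density_cvg.
  by apply: cvgV => //; exact: binomial_density_cvg.
apply: cvg_trans ratio; apply: near_eq_cvg; near=> n.
have sn : (s <= n)%N by near: n; exact: nbhs_infty_ge.
have n0 : (0 < n)%N by apply: leq_trans sn.
rewrite /ex_density /binomial_density /=; field.
by rewrite !pnatr_eq0 -!lt0n bin_gt0 sn fact_gt0 expf_neq0 // pnatr_eq0 -lt0n.
Unshelve. all: end_near.
Qed.

Lemma lambdaP_eq_piQ (p : R) : 1 <= p -> lambdaP p Q P = piQ R Q P.
Proof.
move=> hp; rewrite /lambdaP /piQ (cvg_lim (@Rhausdorff R) (lambdaPn_scaled_cvg p hp)).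
by rewrite (cvg_lim (@Rhausdorff R) exQ_binomial_cvg).
Qed.

End ExtremalDensity.

Theorem lemma3p11 (R : realType) (r s : nat) (Q : {set {set 'I_s}}) (P : hprop) :
  (2 <= r)%N -> (r <= s)%N ->
  uniform r Q ->
  prop_of_rgraphs r P ->
  hereditary P ->
  isolated_closed P ->
  multiplicative r P ->
  (forall p : R, 1 <= p -> lambdaP p Q P = piQ R Q P) /\ Qflat R Q P.
Proof.
move=> r_ge2 r_le_s _ Pu _ _ Pm.
have s_gt0 : (0 < s)%N by apply: leq_trans r_le_s; apply: leq_trans r_ge2.
have lambdaP_eq p : 1 <= p -> lambdaP p Q P = piQ R Q P.
  exact: lambdaP_eq_piQ s_gt0 Pu Pm p.
by split; last apply: lambdaP_eq.
Qed.
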